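(* Let $\mathbb{D}$ be a division ring, let $2\le m,n<\infty$, let $P$ be an $n\times m$ matrix over $\mathbb{D}$ with $\operatorname{rank}P=r\ge 2$, and let $\mathcal{A}=\mathfrak{M}(\mathbb{D}, m, n, P)$. Then $\xi(\mathcal{A})$ is defined and $$\lceil \min\{m,n\}/r\rceil \le \xi(\mathcal{A}) \le \lceil \min\{m,n\}/r\rceil + 3,$$ where $\lceil x\rceil$ denotes the smallest integer $\ge x$.
   Context: $\mathfrak{M}(\mathbb{D}, m, n, P)$ denotes the ring of all $m\times n$ matrices over the division ring $\mathbb{D}$ with entrywise addition and multiplication $A\bullet B = APB$. The commutator is $[x,y]=x\bullet y-y\bullet x$; $[X,Y]=\{[x,y]:x\in X,y\in Y\}$, $XY=\{x\bullet y:x\in X,y\in Y\}$, and $\sum^N S$ denotes the set of sums of $N$ elements of $S$. For a ring $\mathbb{R}$ for which some $N\in\mathbb{N}$ satisfies $\mathbb{R}=\sum^N[\mathbb{R},\mathbb{R}][\mathbb{R},\mathbb{R}]$, $\xi(\mathbb{R})$ is the least such $N$. *)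

From HB Require Import structures.
From mathcomp Require Import all_boot all_order all_algebra.
Set Implicit Arguments. Unset Strict Implicit. Unset Printing Implicit Defensive.
Import GRing.Theory.
Local Open Scope ring_scope.

Definition is_division_ring (D : unitRingType) : Prop :=
  forall x : D, x != 0 -> x \is a GRing.unit.

Definition rows_left_indep (D : unitRingType) (n m k : nat)
  (P : 'M[D]_(n, m)) (f : 'I_k -> 'I_n) : Prop :=
  forall c : 'rV[D]_k, c *m rowsub f P = 0 -> c = 0.

(* rank P = r : the dimension of the (left) row space of P, i.e. the maximal
   number of left-linearly independent rows of P. *)
Definition drank_is (D : unitRingType) (n m : nat) (P : 'M[D]_(n, m)) (r : nat) : Prop :=
  (exists f : 'I_r -> 'I_n, rows_left_indep P f) /\
  (forall (k : nat) (f : 'I_k -> 'I_n), rows_left_indep P f -> (k <= r)%N).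

(* The ring M(D, m, n, P): m x n matrices with product A . B = A P B. *)
Definition pmul (D : unitRingType) (m n : nat) (P : 'M[D]_(n, m))
  (A B : 'M[D]_(m, n)) : 'M[D]_(m, n) := A *m P *m B.

Definition pcomm (D : unitRingType) (m n : nat) (P : 'M[D]_(n, m))
  (x y : 'M[D]_(m, n)) : 'M[D]_(m, n) := pmul P x y - pmul P y x.

Definition in_CC (D : unitRingType) (m n : nat) (P : 'M[D]_(n, m))
  (z : 'M[D]_(m, n)) : Prop :=
  exists x y u v : 'M[D]_(m, n), z = pmul P (pcomm P x y) (pcomm P u v).

Definition sumCC_covers (D : unitRingType) (m n : nat) (P : 'M[D]_(n, m)) (N : nat) : Prop :=
  forall z : 'M[D]_(m, n), exists g : 'I_N -> 'M[D]_(m, n),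
    (forall i, in_CC P (g i)) /\ z = \sum_(i < N) g i.

Definition ceil_div (a b : nat) : nat := ((a + b).-1 %/ b)%N.

From mathcomp Require Import all_boot all_order all_algebra perm zify.
From Stdlib Require Import Classical.
Set Implicit Arguments. Unset Strict Implicit. Unset Printing Implicit Defensive.
Import GRing.Theory.
Local Open Scope ring_scope.

(* Gaussian elimination over D gives P = X * pid_mx u * Y with X, Y invertible, and
   w |-> Y^-1 w X^-1 identifies M(D, m, n, pid_mx u) with M(D, m, n, P); as rank P = r,
   r <= u.

   Lower bound: with P = L S and L of width r, every element c P d of [A,A][A,A] is
   (c L) (S d), so a sum of N of them factors through D^(N r), whereas pid_mx (min m n)
   only factors through D^k for k >= min m n.

   Upper bound: split z into blocks along pid_mx u = diag(1, 0). Pick X, Y in M_u(D)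
   with Y and T = XY - YX invertible. One element of [A,A][A,A] has blocks T^2, z12,
   z21 and z21 T^-2 z12; the rest of the upper-left block is a sum of three products
   of two commutators of M_u(D); the rest of the lower-right block is a sum of
   ceil(min(m-u, n-u)/u) products of matrices of width u, and each such product is an
   element of [A,A][A,A]. *)

Lemma sub_block_mx (V : zmodType) m1 m2 n1 n2 (A A' : 'M[V]_(m1, n1)) (B B' : 'M[V]_(m1, n2))
    (C C' : 'M[V]_(m2, n1)) (E E' : 'M[V]_(m2, n2)) :
  block_mx A B C E - block_mx A' B' C' E' = block_mx (A - A') (B - B') (C - C') (E - E').
Proof. by rewrite opp_block_mx add_block_mx. Qed.

Lemma block_mx_sum_dr (V : nmodType) m1 m2 n1 n2 N (F : 'I_N -> 'M[V]_(m2, n2)) :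
  block_mx 0 0 0 (\sum_i F i) = \sum_i block_mx (0 : 'M[V]_(m1, n1)) 0 0 (F i).
Proof.
apply: (big_rec2 (fun x y => block_mx 0 0 0 x = y)); first exact: block_mx0.
by move=> i x y _ <-; rewrite add_block_mx !addr0.
Qed.

Section MatrixEquivalence.
Variable R : pzRingType.

Definition invertible_mx n (X : 'M[R]_n) : Prop :=
  exists Xi : 'M[R]_n, X *m Xi = 1%:M /\ Xi *m X = 1%:M.

Definition mx_equiv m n (A B : 'M[R]_(m, n)) : Prop :=
  exists X Y, [/\ invertible_mx X, invertible_mx Y & A = X *m B *m Y].

Lemma invertible_mx1 n : invertible_mx (1%:M : 'M[R]_n).
Proof. by exists 1%:M; rewrite mulmx1. Qed.

Lemma invertible_mxM n (X Y : 'M[R]_n) :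
  invertible_mx X -> invertible_mx Y -> invertible_mx (X *m Y).
Proof.
move=> [Xi [hX hXi]] [Yi [hY hYi]]; exists (Yi *m Xi); split.
  by rewrite mulmxA -(mulmxA X) hY mulmx1 hX.
by rewrite mulmxA -(mulmxA Yi) hXi mulmx1 hYi.
Qed.

Lemma mul_tperm_mx_id n (i j : 'I_n) : tperm_mx i j *m tperm_mx i j = 1%:M :> 'M[R]_n.
Proof. by rewrite /tperm_mx -perm_mxM tperm2 perm_mx1. Qed.

Lemma invertible_tperm_mx n (i j : 'I_n) : invertible_mx (tperm_mx i j : 'M[R]_n).
Proof. by exists (tperm_mx i j); rewrite mul_tperm_mx_id. Qed.

Lemma invertible_block_diag n1 n2 (A : 'M[R]_n1) (B : 'M[R]_n2) :
  invertible_mx A -> invertible_mx B -> invertible_mx (block_mx A 0 0 B).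
Proof.
move=> [Ai [hA hAi]] [Bi [hB hBi]]; exists (block_mx Ai 0 0 Bi).
by rewrite !mulmx_block !(mulmx0, mul0mx, addr0, add0r) hA hAi hB hBi -!scalar_mx_block.
Qed.

Lemma invertible_block_upper n1 n2 (B : 'M[R]_(n1, n2)) :
  invertible_mx (block_mx 1%:M B 0 1%:M).
Proof.
exists (block_mx 1%:M (- B) 0 1%:M).
by rewrite !mulmx_block !(mulmx0, mul0mx, mulmx1, mul1mx, addr0, add0r, addrN, addNr)
  -!scalar_mx_block.
Qed.

Lemma invertible_block_lower n1 n2 (C : 'M[R]_(n2, n1)) :
  invertible_mx (block_mx 1%:M 0 C 1%:M).
Proof.
exists (block_mx 1%:M 0 (- C) 1%:M).
by rewrite !mulmx_block !(mulmx0, mul0mx, mulmx1, mul1mx, addr0, add0r, addrN, addNr)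
  -!scalar_mx_block.
Qed.

Lemma mx_equiv_refl m n (A : 'M[R]_(m, n)) : mx_equiv A A.
Proof. by exists 1%:M, 1%:M; rewrite mul1mx mulmx1; split => //; apply: invertible_mx1. Qed.

Lemma mx_equiv_trans m n (A B C : 'M[R]_(m, n)) :
  mx_equiv A B -> mx_equiv B C -> mx_equiv A C.
Proof.
move=> [X [Y [hX hY ->]]] [X' [Y' [hX' hY' ->]]].
exists (X *m X'), (Y' *m Y); split; try exact: invertible_mxM.
by rewrite !mulmxA.
Qed.

Lemma mx_equiv_block_diag m1 n1 m2 n2 (A A' : 'M[R]_(m1, n1)) (B B' : 'M[R]_(m2, n2)) :
  mx_equiv A A' -> mx_equiv B B' -> mx_equiv (block_mx A 0 0 B) (block_mx A' 0 0 B').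
Proof.
move=> [X [Y [hX hY ->]]] [X' [Y' [hX' hY' ->]]].
exists (block_mx X 0 0 X'), (block_mx Y 0 0 Y'); split; try exact: invertible_block_diag.
by rewrite !mulmx_block !(mulmx0, mul0mx, addr0, add0r).
Qed.

(* [E'] is the Schur complement [E - C A^-1 B]. *)
Lemma mx_equiv_pivot k1 k2 l2 (A : 'M[R]_k1) (B : 'M[R]_(k1, l2))
    (C : 'M[R]_(k2, k1)) (E : 'M[R]_(k2, l2)) :
  invertible_mx A -> exists E', mx_equiv (block_mx A B C E) (block_mx 1%:M 0 0 E').
Proof.
move=> /[dup] hA [Ai [hAAi hAiA]]; exists (E - C *m Ai *m B).
exists (block_mx 1%:M 0 (C *m Ai) 1%:M *m block_mx A 0 0 1%:M), (block_mx 1%:M (Ai *m B) 0 1%:M).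
split.
- apply: invertible_mxM; first exact: invertible_block_lower.
  exact: invertible_block_diag hA (invertible_mx1 _).
- exact: invertible_block_upper.
rewrite !mulmx_block !(mulmx0, mul0mx, mulmx1, mul1mx, addr0, add0r).
by rewrite -mulmxA hAiA mulmx1 !mulmxA hAAi mul1mx addrC subrK.
Qed.

Lemma pid_mx_add m n k u :
  pid_mx (k + u) = block_mx 1%:M 0 0 (pid_mx u) :> 'M[R]_(k + m, k + n).
Proof.
apply/matrixP => x y; rewrite -[x]splitK -[y]splitK.
case: (split x) => [x1|x2]; case: (split y) => [y1|y2];
  rewrite ?block_mxEul ?block_mxEur ?block_mxEdl ?block_mxEdr !mxE /=.
- by rewrite (leq_trans (ltn_ord x1) (leq_addr _ _)) andbT.
- by rewrite eqn_leq [(k + y2 <= x1)%N]leqNgt (leq_trans (ltn_ord x1) (leq_addr _ _)) andbF.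
- by rewrite eqn_leq [(k + x2 <= y1)%N]leqNgt (leq_trans (ltn_ord y1) (leq_addr _ _)).
- by rewrite eqn_add2l ltn_add2l.
Qed.

End MatrixEquivalence.

Section DivisionRing.
Variable D : unitRingType.
Hypothesis divD : is_division_ring D.

Lemma invertible_scalar_mx n (a : D) : a != 0 -> invertible_mx (a%:M : 'M[D]_n).
Proof. by move=> /divD aU; exists a^-1%:M; rewrite -!scalar_mxM mulrV ?mulVr. Qed.

Lemma mx_equiv_pid a b (A : 'M[D]_(a, b)) :
  exists2 u, (u <= minn a b)%N & mx_equiv A (pid_mx u).
Proof.
elim: a b A => [|a IHa] b A.
  by exists 0%N => //; rewrite pid_mx_0 (flatmx0 A); apply: mx_equiv_refl.
have [->|nzA] := eqVneq A 0.
  by exists 0%N => //; rewrite pid_mx_0; apply: mx_equiv_refl.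
have /existsP [i /existsP [j Aij]] : [exists i, exists j, A i j != 0].
  apply: contraR nzA => /existsPn noentry; apply/eqP/matrixP => i j.
  by have /existsPn/(_ j) := noentry i; rewrite negbK mxE => /eqP.
case: b => [|b] in A nzA j Aij *; first by case: (j).
pose A1 : 'M[D]_(1 + a, 1 + b) := xrow i 0 (xcol j 0 A).
have A_A1 : mx_equiv A A1.
  exists (tperm_mx i 0), (tperm_mx j 0); split; try exact: invertible_tperm_mx.
  by rewrite /A1 xrowE xcolE !mulmxA mul_tperm_mx_id mul1mx -mulmxA mul_tperm_mx_id mulmx1.
have A1_pivot : ulsubmx A1 = (A i j)%:M.
  have lshift0 k : lshift k (0 : 'I_1) = 0 :> 'I_(1 + k) by apply: val_inj.
  by rewrite [LHS]mx11_scalar !mxE /= !lshift0 !tpermR.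
have [E' A1_E'] := mx_equiv_pivot (ursubmx A1) (dlsubmx A1) (drsubmx A1)
  (invertible_scalar_mx 1 Aij).
have [u le_u E'_u] := IHa b E'.
exists u.+1; first by rewrite minnSS ltnS.
rewrite -A1_pivot submxK in A1_E'.
rewrite (pid_mx_add _ _ _ 1); apply: mx_equiv_trans A_A1 (mx_equiv_trans A1_E' _).
exact: mx_equiv_block_diag (mx_equiv_refl _) E'_u.
Qed.

Lemma left_kernel_tall_mx a b (A : 'M[D]_(a, b)) :
  (b < a)%N -> exists2 c : 'rV[D]_a, c != 0 & c *m A = 0.
Proof.
move=> lt_ba; have [u le_u [X [Y [[Xi [_ XiX]] _ ->]]]] := mx_equiv_pid A.
have lt_last : (a.-1 < a)%N by lia.
pose last := Ordinal lt_last.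
exists (delta_mx 0 last *m Xi).
  apply/eqP => /(congr1 (mulmx^~ X)); rewrite -mulmxA XiX mulmx1 mul0mx.
  by move/matrixP/(_ 0 last); rewrite !mxE !eqxx; apply/eqP; rewrite oner_eq0.
rewrite !mulmxA -(mulmxA _ Xi) XiX mulmx1 -rowE.
have -> : row last (pid_mx u : 'M[D]_(a, b)) = 0.
  by apply/rowP => y; rewrite !mxE ltnNge (leq_trans le_u) ?andbF //=; lia.
by rewrite mul0mx.
Qed.

Lemma dim_le_of_mulmx1 k s (C : 'M[D]_(k, s)) (B : 'M[D]_(s, k)) :
  C *m B = 1%:M -> (k <= s)%N.
Proof.
move=> CB1; rewrite leqNgt; apply/negP => /(left_kernel_tall_mx C) [c nz_c cC0].
by move: nz_c; rewrite -[c]mulmx1 -CB1 mulmxA cC0 mul0mx eqxx.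
Qed.

Lemma drank_le_inner_dim n m r t (P : 'M[D]_(n, m)) (L : 'M[D]_(n, t)) (S : 'M[D]_(t, m)) :
  drank_is P r -> P = L *m S -> (r <= t)%N.
Proof.
move=> [[f indep_f] _] eP; rewrite leqNgt; apply/negP.
move=> /(left_kernel_tall_mx (rowsub f L)) [c nz_c cL0].
suff /indep_f c0 : c *m rowsub f P = 0 by rewrite c0 eqxx in nz_c.
by rewrite eP rowsubE !mulmxA -(mulmxA c) -rowsubE cL0 mul0mx.
Qed.

Lemma drank_factor n m r (P : 'M[D]_(n, m)) :
  drank_is P r -> exists (L : 'M[D]_(n, r)) (S : 'M[D]_(r, m)), P = L *m S.
Proof.
move=> [[f indep_f] max_r]; pose S := rowsub f P.
have row_span i : exists l : 'rV[D]_r, row i P = l *m S.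
  pose g (k : 'I_(r + 1)) := if split k is inl k1 then f k1 else i.
  have rows_g : rowsub g P = col_mx S (row i P).
    by apply/matrixP => k j; rewrite !mxE /g; case: (split k) => k'; rewrite !mxE.
  have [c [gc0 nz_c]] : exists c : 'rV[D]_(r + 1), c *m rowsub g P = 0 /\ c <> 0.
    apply: NNPP => no_c; have /max_r : rows_left_indep P g.
      by move=> c gc0; apply: NNPP => nz_c; apply: no_c; exists c.
    by rewrite addn1 ltnn.
  rewrite rows_g -[c]hsubmxK mul_row_col [rsubmx c]mx11_scalar mul_scalar_mx in gc0.
  set d := rsubmx c 0 0 in gc0; set c1 := lsubmx c in gc0.
  have nz_d : d != 0.
    apply/eqP => d0; apply: nz_c; rewrite d0 scale0r addr0 in gc0.
    have c2_0 : rsubmx c = 0 by apply/rowP => k; rewrite ord1 [RHS]mxE -d0 /d.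
    by rewrite -[c]hsubmxK -/c1 (indep_f _ gc0) c2_0 row_mx0.
  have : d^-1 *: (c1 *m S + d *: row i P) = 0 by rewrite gc0 scaler0.
  rewrite scalerDr scalerA mulVr ?divD // scale1r => /eqP.
  rewrite addrC addr_eq0 => /eqP ->; exists (- d^-1 *: c1).
  by rewrite scaleNr mulNmx scalemxAl.
have [l hl] := fin_all_exists row_span.
exists (\matrix_i l i), S.
by apply/row_matrixP => i; rewrite row_mul rowK hl.
Qed.

End DivisionRing.

Lemma leq_ceil_div k r N : (0 < r)%N -> (ceil_div k r <= N)%N = (k <= N * r)%N.
Proof. by move=> r_gt0; rewrite /ceil_div -ltnS ltn_divLR // mulSn; apply/idP/idP => ?; lia. Qed.

Lemma ceil_div_addl u x : (0 < u)%N -> ceil_div (u + x) u = (ceil_div x u).+1.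
Proof.
move=> u_gt0; rewrite /ceil_div.
have -> : ((u + x + u).-1 = (x + u).-1 + 1 * u)%N by lia.
by rewrite divnDMl // addn1.
Qed.

Lemma leq_ceil_div2l x r u : (0 < r)%N -> (r <= u)%N -> (ceil_div x u <= ceil_div x r)%N.
Proof.
move=> r_gt0 le_ru; rewrite leq_ceil_div ?(leq_trans r_gt0) //.
apply: leq_trans (leq_mul (leqnn _) le_ru).
by rewrite -leq_ceil_div.
Qed.

Lemma half_decomp t : (2 <= t)%N -> exists2 p, (0 < p)%N & (t = p + p \/ t = p + p.+1)%N.
Proof.
move=> t_ge2; have := odd_double_half t; rewrite -addnn.
by move: t./2 => h e; exists h; case: (odd t) in e *; lia.
Qed.

Section SumsOfCommutatorProducts.
Variables (D : unitRingType) (m n : nat) (P : 'M[D]_(n, m)).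

Definition sumCC N (z : 'M[D]_(m, n)) : Prop :=
  exists g : 'I_N -> 'M[D]_(m, n), (forall i, in_CC P (g i)) /\ z = \sum_(i < N) g i.

Lemma in_CC0 : in_CC P 0.
Proof. by exists 0, 0, 0, 0; rewrite /pcomm /pmul !mul0mx subrr !mul0mx. Qed.

Lemma sumCC0 N : sumCC N 0.
Proof. by exists (fun=> 0); split=> [_|]; [apply: in_CC0 | rewrite big1]. Qed.

Lemma sumCC1 z : in_CC P z -> sumCC 1 z.
Proof. by move=> CCz; exists (fun=> z); rewrite big_ord1. Qed.

Lemma sumCCD N1 N2 z1 z2 : sumCC N1 z1 -> sumCC N2 z2 -> sumCC (N1 + N2) (z1 + z2).
Proof.
move=> [g1 [CCg1 ->]] [g2 [CCg2 ->]].
exists (fun i => match split i with inl i1 => g1 i1 | inr i2 => g2 i2 end); split.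
  by move=> i; case: (split i).
rewrite big_split_ord; congr (_ + _); apply: eq_bigr => i _.
  by rewrite (unsplitK (inl i : 'I_N1 + 'I_N2)).
by rewrite (unsplitK (inr i : 'I_N1 + 'I_N2)).
Qed.

Lemma sumCC_widen N N' z : (N <= N')%N -> sumCC N z -> sumCC N' z.
Proof. by move=> le_NN' /sumCCD/(_ (sumCC0 (N' - N))); rewrite addr0 subnKC. Qed.

Lemma sumCC_covers_widen N N' : sumCC_covers P N -> (N <= N')%N -> sumCC_covers P N'.
Proof. by move=> coverP le_NN' z; apply: sumCC_widen le_NN' (coverP z). Qed.

End SumsOfCommutatorProducts.

Lemma sumCC_covers_equiv (D : unitRingType) m n (P P' : 'M[D]_(n, m)) N :
  mx_equiv P P' -> sumCC_covers P' N -> sumCC_covers P N.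
Proof.
move=> [X [Y [[Xi [XXi XiX]] [Yi [YYi YiY]] eP]]] coverP' z.
pose psi (w : 'M[D]_(m, n)) := Yi *m w *m Xi.
have psiM x y : psi (pmul P' x y) = pmul P (psi x) (psi y).
  rewrite /psi /pmul eP !mulmxA -(mulmxA _ Xi X) XiX mulmx1.
  by rewrite -(mulmxA _ Y Yi) YYi mulmx1.
have psi_comm x y : psi (pcomm P' x y) = pcomm P (psi x) (psi y).
  by rewrite /pcomm -!psiM /psi mulmxBr mulmxBl.
have [g [CCg ez]] := coverP' (Y *m z *m X).
exists (psi \o g); split.
  move=> i /=; have [a [b [c [d ->]]]] := CCg i.
  by exists (psi a), (psi b), (psi c), (psi d); rewrite psiM !psi_comm.
by rewrite -mulmx_suml -mulmx_sumr -ez !mulmxA YiY mul1mx -mulmxA XXi mulmx1.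
Qed.

Lemma sumCC_covers_lower_bound (D : unitRingType) m n r (P : 'M[D]_(n, m)) N :
  is_division_ring D -> drank_is P r -> (0 < r)%N -> sumCC_covers P N ->
  (ceil_div (minn m n) r <= N)%N.
Proof.
move=> divD rankP r_gt0 coverP; have [L [S eP]] := drank_factor divD rankP.
set k := minn m n; have [g [CCg sum_g]] := coverP (pid_mx k).
have factor_g i : exists AB : 'M[D]_(m, r) * 'M[D]_(r, n), g i = AB.1 *m AB.2.
  have [a [b [c [d ->]]]] := CCg i.
  by exists (pcomm P a b *m L, S *m pcomm P c d); rewrite /pmul eP !mulmxA.
have [AB eAB] := fin_all_exists factor_g.
have pid_factor : pid_mx k = \mxrow_i (AB i).1 *m \mxcol_i (AB i).2.
  by rewrite mul_mxrow_mxcol sum_g; apply: eq_bigr => i _; rewrite eAB.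
rewrite leq_ceil_div //.
have -> : (N * r = \sum_(i < N) r)%N by rewrite sum_nat_const card_ord.
apply: (dim_le_of_mulmx1 divD (C := (pid_mx k : 'M_(k, m)) *m \mxrow_i (AB i).1)
  (B := \mxcol_i (AB i).2 *m (pid_mx k : 'M_(n, k)))).
rewrite mulmxA -(mulmxA _ (mxrow _)) -pid_factor !mul_pid_mx.
by rewrite (_ : minn n _ = k) ?pid_mx_1 // /k; lia.
Qed.

Section Commutators.
Variable R : pzRingType.

Definition mxcomm n (X Y : 'M[R]_n) : 'M[R]_n := X *m Y - Y *m X.

Definition is_mxcomm n (K : 'M[R]_n) : Prop := exists X Y, K = mxcomm X Y.

Definition is_mxcomm_prod n (K : 'M[R]_n) : Prop :=
  exists A B, [/\ is_mxcomm A, is_mxcomm B & K = A *m B].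

Definition invertible_comm_pair n (X Y : 'M[R]_n) : Prop :=
  invertible_mx Y /\ invertible_mx (mxcomm X Y).

Lemma mxcomm_block_diag n1 n2 (X1 Y1 : 'M[R]_n1) (X2 Y2 : 'M[R]_n2) :
  mxcomm (block_mx X1 0 0 X2) (block_mx Y1 0 0 Y2) =
  block_mx (mxcomm X1 Y1) 0 0 (mxcomm X2 Y2).
Proof. by rewrite /mxcomm !mulmx_block !(mulmx0, mul0mx, addr0, add0r) sub_block_mx !subr0. Qed.

Lemma mxcomm_block_offdiag n1 n2 (A : 'M[R]_(n1, n2)) (B : 'M[R]_(n2, n1)) :
  mxcomm (block_mx 1%:M 0 0 0) (block_mx 0 A (- B) 0) = block_mx 0 A B 0.
Proof.
rewrite /mxcomm !mulmx_block !(mulmx0, mul0mx, mulmx1, mul1mx, addr0, add0r).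
by rewrite sub_block_mx !(subr0, sub0r, opprK).
Qed.

Lemma mxcomm_block_corners n1 n2 (A : 'M[R]_(n1, n2)) (B : 'M[R]_(n2, n1)) :
  mxcomm (block_mx 0 A 0 0) (block_mx 0 0 B 0) = block_mx (A *m B) 0 0 (- (B *m A)).
Proof.
rewrite /mxcomm !mulmx_block !(mulmx0, mul0mx, addr0, add0r).
by rewrite sub_block_mx !(subr0, sub0r).
Qed.

Lemma invertible_comm_pair_block_diag n1 n2 (X1 Y1 : 'M[R]_n1) (X2 Y2 : 'M[R]_n2) :
  invertible_comm_pair X1 Y1 -> invertible_comm_pair X2 Y2 ->
  invertible_comm_pair (block_mx X1 0 0 X2) (block_mx Y1 0 0 Y2).
Proof.
move=> [Y1inv T1inv] [Y2inv T2inv]; rewrite /invertible_comm_pair mxcomm_block_diag.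
by split; apply: invertible_block_diag.
Qed.

Lemma invertible_comm_pair_even p : exists X Y : 'M[R]_(p + p), invertible_comm_pair X Y.
Proof.
exists (block_mx 1%:M 0 0 0), (block_mx 0 1%:M (- 1%:M) 0).
rewrite /invertible_comm_pair mxcomm_block_offdiag; split.
  exists (block_mx 0 (- 1%:M) 1%:M 0).
  by rewrite !mulmx_block !(mulmx0, mul0mx, mulmx1, mul1mx, mulmxN, mulNmx, addr0, add0r, opprK)
    -!scalar_mx_block.
exists (block_mx 0 1%:M 1%:M 0).
by rewrite !mulmx_block !(mulmx0, mul0mx, mulmx1, addr0, add0r) -!scalar_mx_block.
Qed.

Definition mx3 (l : seq (seq R)) : 'M[R]_3 := \matrix_(i, j) nth 0 (nth [::] l i) j.

Lemma invertible_comm_pair3 : exists X Y : 'M[R]_3, invertible_comm_pair X Y.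
Proof.
pose X := mx3 [:: [:: -1; 0; 0]; [:: 0; 0; 0]; [:: 1; 1; 0]].
pose Y := mx3 [:: [:: 0; 1; 0]; [:: 0; 0; 1]; [:: 1; 0; 0]].
pose Yi := mx3 [:: [:: 0; 0; 1]; [:: 1; 0; 0]; [:: 0; 1; 0]].
pose T := mx3 [:: [:: 0; -1; 0]; [:: -1; -1; 0]; [:: 1; 1; 1]].
pose Ti := mx3 [:: [:: 1; -1; 0]; [:: -1; 0; 0]; [:: 0; 1; 1]].
have eT : mxcomm X Y = T.
  apply/matrixP => i j; rewrite !mxE !big_ord_recl !big_ord0 !mxE.
  case: i => [[|[|[|?]]] ?] //; case: j => [[|[|[|?]]] ?] //=;
    by rewrite ?(mulr0, mul0r, mulr1, mul1r, mulrN1, mulN1r, addr0, add0r,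
                  addrN, addNr, opprK, oppr0, subr0, sub0r).
exists X, Y; split; [exists Yi | rewrite eT; exists Ti]; split;
  apply/matrixP => i j; rewrite !mxE !big_ord_recl !big_ord0 !mxE;
  case: i => [[|[|[|?]]] ?] //; case: j => [[|[|[|?]]] ?] //=;
  by rewrite ?(mulr0, mul0r, mulr1, mul1r, mulrN1, mulN1r, addr0, add0r,
                  addrN, addNr, opprK, oppr0, subr0, sub0r).
Qed.

Lemma exists_invertible_comm_pair t :
  (2 <= t)%N -> exists X Y : 'M[R]_t, invertible_comm_pair X Y.
Proof.
case/half_decomp => p p_gt0 [->|->]; first exact: invertible_comm_pair_even.
have -> : (p + p.+1 = 3 + (p.-1 + p.-1))%N by lia.
have [X1 [Y1 pair1]] := invertible_comm_pair3.
have [X2 [Y2 pair2]] := invertible_comm_pair_even p.-1.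
by do 2 eexists; apply: invertible_comm_pair_block_diag pair1 pair2.
Qed.

Lemma scalar1_sub_pid_mx n (l : 'I_n) : l.+1 = n -> 1%:M - pid_mx l = delta_mx l l :> 'M[R]_n.
Proof.
move=> l_last; apply/matrixP => i j; rewrite !mxE.
have : (i <= l)%N by rewrite -ltnS l_last.
rewrite leq_eqVlt => /orP[/eqP/val_inj -> | lt_il].
  by rewrite ltnn andbF /= subr0 eqxx eq_sym.
have ne_il : i != l by rewrite -val_eqE /= ltn_eqF.
by rewrite lt_il andbT (negPf ne_il) /= subrr.
Qed.

(* With N = E_(i0,l) M, the product (E_(l,i0) + E_(l,i1)) (N - N E_(i0,i0) + E_(i1,i0) N E_(i0,i0))
   is E_(l,i0) N = E_(l,l) M; its first factor is [E_(l,l), itself] and its second factor is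
   [E_(i0,i0), N - N E_(i0,i0) - E_(i1,i0) N E_(i0,i0)]. *)
Lemma is_mxcomm_prod_delta_mul n (l i0 i1 : 'I_n) (M : 'M[R]_n) :
  i0 != l -> i1 != l -> i0 != i1 -> is_mxcomm_prod (delta_mx l l *m M).
Proof.
move=> /negPf i0l /negPf i1l /negPf i01; have i10 : (i1 == i0) = false by rewrite eq_sym.
pose N := delta_mx i0 l *m M.
pose E00 := delta_mx i0 i0 : 'M[R]_n.
exists (delta_mx l i0 + delta_mx l i1), (N - N *m E00 + delta_mx i1 i0 *m N *m E00); split.
- exists (delta_mx l l), (delta_mx l i0 + delta_mx l i1).
  by rewrite /mxcomm mulmxDr mulmxDl !mul_delta_mx !mul_delta_mx_0 ?i0l ?i1l // addr0 subr0.
- exists E00, (N - N *m E00 - delta_mx i1 i0 *m N *m E00).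
  rewrite /mxcomm /N /E00 !(mulmxBr, mulmxBl, mulmxDr, mulmxDl, mulmxN, mulNmx) !mulmxA.
  rewrite !mul_delta_mx.
  rewrite !mul_delta_mx_0 ?i01 // !mul0mx -!(mulmxA _ (delta_mx i0 i0)) !mul_delta_mx.
  by rewrite !(subr0, sub0r, subrr, opprK, opprB, addr0).
rewrite /N /E00 !(mulmxBr, mulmxBl, mulmxDr, mulmxDl, mulmxN, mulNmx) !mulmxA !mul_delta_mx.
rewrite !mul_delta_mx_0 ?i01 ?i10 // !mul0mx.
by rewrite !(subr0, sub0r, addr0, add0r) subrK.
Qed.

(* With A B = 1 and B A = J, diag(1, -J) [0 M12; -M21 0] supplies the blocks M12 and J M21,
   and [0 A; B 0] [0 A M22; B M11 0] the blocks M11 and J M22; only the rows past 2p remain. *)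
Lemma is_mxcomm_prod_split p q (M : 'M[R]_(p + q)) : (p <= q)%N ->
  exists K0 K1, [/\ is_mxcomm_prod K0, is_mxcomm_prod K1 &
    M = K0 + K1 + (1%:M - pid_mx (p + p)) *m M].
Proof.
move=> le_pq.
pose A : 'M[R]_(p, q) := pid_mx p; pose B : 'M[R]_(q, p) := pid_mx p.
pose J : 'M[R]_q := pid_mx p.
have AB1 : A *m B = 1%:M by rewrite mul_pid_mx minnn (minn_idPr le_pq) pid_mx_1.
have BAJ : B *m A = J by rewrite mul_pid_mx !minnn.
have offdiag X Y : is_mxcomm (block_mx 0 X Y 0 : 'M[R]_(p + q)).
  by rewrite -[Y]opprK -mxcomm_block_offdiag; do 2 eexists.
rewrite -[M]submxK; set M11 := ulsubmx M; set M12 := ursubmx M.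
set M21 := dlsubmx M; set M22 := drsubmx M.
exists (block_mx 1%:M 0 0 (- J) *m block_mx 0 M12 (- M21) 0),
  (block_mx 0 A B 0 *m block_mx 0 (A *m M22) (B *m M11) 0); split.
- exists (block_mx 1%:M 0 0 (- J)), (block_mx 0 M12 (- M21) 0).
  split; [| exact: offdiag | by []].
  by rewrite -AB1 -BAJ -mxcomm_block_corners; do 2 eexists.
- exists (block_mx 0 A B 0), (block_mx 0 (A *m M22) (B *m M11) 0).
  by split; [exact: offdiag | exact: offdiag |].
rewrite (pid_mx_add _ _ _ p) mulmxBl mul1mx.
rewrite !mulmx_block !(mulmx0, mul0mx, mulmx1, mul1mx, addr0, add0r).
rewrite !mulmxA AB1 BAJ !mul1mx mulNmx mulmxN opprK !add_block_mx !(addr0, add0r).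
by rewrite -/J addrC subrK.
Qed.

Lemma sum3_mxcomm_prod t : (2 <= t)%N -> forall M : 'M[R]_t,
  exists K0 K1 K2,
    [/\ is_mxcomm_prod K0, is_mxcomm_prod K1, is_mxcomm_prod K2 & M = K0 + K1 + K2].
Proof.
move=> /half_decomp [p p_gt0 [] ->] M.
  have [K0 [K1 [CK0 CK1 eM]]] := is_mxcomm_prod_split M (leqnn p).
  exists K0, K1, 0; split=> //.
    by exists 0, 0; split; [exists 0, 0 | exists 0, 0 | ]; rewrite /mxcomm ?mulmx0 ?subrr.
  by rewrite pid_mx_1 subrr mul0mx addr0 in eM; rewrite addr0.
have [K0 [K1 [CK0 CK1 eM]]] := is_mxcomm_prod_split M (leqnSn p).
exists K0, K1, ((1%:M - pid_mx (p + p)) *m M); split=> //.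
have lt_last : (p + p < p + p.+1)%N by rewrite addnS.
rewrite (scalar1_sub_pid_mx (l := Ordinal lt_last)); last by rewrite /= addnS.
have lt0 : (0 < p + p.+1)%N by rewrite addnS.
have lt1 : (1 < p + p.+1)%N by lia.
by apply: (is_mxcomm_prod_delta_mul (i0 := Ordinal lt0) (i1 := Ordinal lt1));
  rewrite -val_eqE /=; lia.
Qed.
End Commutators.

Lemma mx_sum_thin_products (R : pzRingType) a b c t (W : 'M[R]_(a, b)) :
  (minn a b <= c * t)%N ->
  exists (B : 'I_c -> 'M[R]_(a, t)) (B' : 'I_c -> 'M[R]_(t, b)), W = \sum_i B i *m B' i.
Proof.
have -> : (c * t = \sum_(i < c) t)%N by rewrite sum_nat_const card_ord.
move=> le_min.
suff [C [C' ->]] : exists (C : 'M[R]_(a, \sum_(i < c) t)) C', W = C *m C'.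
  exists (submxrow C), (submxcol C').
  by rewrite -{1}(submxrowK C) -{1}(submxcolK C') mul_mxrow_mxcol.
have [le_ab | lt_ba] := leqP a b.
  exists (pid_mx a), (pid_mx a *m W); rewrite mulmxA mul_pid_mx.
  rewrite (_ : minn _ _ = a) ?pid_mx_1 ?mul1mx //.
  by move: le_min; rewrite (minn_idPl le_ab); lia.
exists (W *m pid_mx b), (pid_mx b); rewrite -mulmxA mul_pid_mx.
rewrite (_ : minn _ _ = b) ?pid_mx_1 ?mulmx1 //.
by move: le_min; rewrite (minn_idPr (ltnW lt_ba)); lia.
Qed.

Section PidBlocks.
Variables (D : unitRingType) (t a b : nat).
Local Notation P := (pid_mx t : 'M[D]_(t + b, t + a)).

Lemma pid_block_mul (A A' : 'M[D]_t) (B B' : 'M[D]_(t, b)) (C C' : 'M[D]_(a, t))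
    (E E' : 'M[D]_(a, b)) :
  block_mx A B C E *m P *m block_mx A' B' C' E' =
  block_mx (A *m A') (A *m B') (C *m A') (C *m B').
Proof. by rewrite pid_mx_block !mulmx_block !(mulmx0, mul0mx, mulmx1, mul1mx, addr0, add0r). Qed.

Lemma in_CC_pid_block (X Y X' Y' : 'M[D]_t) (X21 Y21 : 'M[D]_(a, t))
    (X12 Y12 : 'M[D]_(t, b)) :
  in_CC P (block_mx (mxcomm X Y *m mxcomm X' Y') (mxcomm X Y *m (X' *m Y12 - Y' *m X12))
                    ((X21 *m Y - Y21 *m X) *m mxcomm X' Y')
                    ((X21 *m Y - Y21 *m X) *m (X' *m Y12 - Y' *m X12))).
Proof.
exists (block_mx X 0 X21 0), (block_mx Y 0 Y21 0), (block_mx X' X12 0 0), (block_mx Y' Y12 0 0).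
by rewrite /pcomm /pmul !pid_block_mul !sub_block_mx !mulmx0 !subrr pid_block_mul.
Qed.

Lemma in_CC_pid_block_ul (K : 'M[D]_t) : is_mxcomm_prod K -> in_CC P (block_mx K 0 0 0).
Proof.
move=> [A [B [[X [Y ->]] [X' [Y' ->]] ->]]].
have := in_CC_pid_block X Y X' Y' (0 : 'M_(a, t)) 0 (0 : 'M_(t, b)) 0.
by rewrite !(mulmx0, mul0mx, subr0).
Qed.

Lemma in_CC_pid_block_dr (B : 'M[D]_(a, t)) (B' : 'M[D]_(t, b)) :
  in_CC P (block_mx 0 0 0 (B *m B')).
Proof.
have := in_CC_pid_block 1%:M 1%:M 1%:M 1%:M B 0 0 B'.
by rewrite /mxcomm !(mulmx0, mul0mx, subr0, mulmx1, mul1mx, subrr).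
Qed.

Lemma sumCC_covers_pid_block : (2 <= t)%N -> sumCC_covers P (1 + 3 + ceil_div (minn a b) t).
Proof.
move=> t_ge2 z.
have [X [Y [[Yi [YYi YiY]] [Ti [TTi TiT]]]]] := exists_invertible_comm_pair D t_ge2.
set T := mxcomm X Y in TTi TiT.
rewrite -[z]submxK; set Z11 := ulsubmx z; set Z12 := ursubmx z.
set Z21 := dlsubmx z; set Z22 := drsubmx z.
pose Z22' := Z21 *m Ti *m Ti *m Z12.
have -> : block_mx Z11 Z12 Z21 Z22 = block_mx (T *m T) Z12 Z21 Z22' +
    block_mx (Z11 - T *m T) 0 0 0 + block_mx 0 0 0 (Z22 - Z22').
  by rewrite !add_block_mx !(addr0, add0r) (addrC (T *m T)) subrK addrC subrK.
apply: sumCCD; first apply: sumCCD.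
- apply: sumCC1.
  have := in_CC_pid_block X Y X Y (Z21 *m Ti *m Yi) 0 (- (Yi *m Ti *m Z12)) 0.
  rewrite -/T !(mulmx0, mul0mx, subr0, sub0r, mulmxN, opprK) -!mulmxA.
  rewrite !(mulmxA Y Yi) YYi !mul1mx !(mulmxA Yi Y) YiY !mul1mx.
  by rewrite !(mulmxA T Ti) TTi !mul1mx TiT mulmx1 !mulmxA.
- have [K0 [K1 [K2 [CK0 CK1 CK2 ->]]]] := sum3_mxcomm_prod t_ge2 (Z11 - T *m T).
  have -> : block_mx (K0 + K1 + K2) 0 0 0 =
      block_mx K0 0 0 0 + block_mx K1 0 0 0 + block_mx K2 0 0 0 :> 'M_(t + a, t + b).
    by rewrite !add_block_mx !addr0.
  rewrite -[3%N]/(1 + 1 + 1)%N.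
  by apply: sumCCD; [apply: sumCCD |]; apply: sumCC1; apply: in_CC_pid_block_ul.
- have le_min : (minn a b <= ceil_div (minn a b) t * t)%N.
    by rewrite -leq_ceil_div ?(ltnW t_ge2).
  have [B [B' ->]] := mx_sum_thin_products (Z22 - Z22') le_min.
  rewrite block_mx_sum_dr; exists (fun i => block_mx 0 0 0 (B i *m B' i)); split=> // i.
  exact: in_CC_pid_block_dr.
Qed.
End PidBlocks.

Lemma sumCC_covers_pid (D : unitRingType) m n u :
  (2 <= u)%N -> (u <= m)%N -> (u <= n)%N ->
  sumCC_covers (pid_mx u : 'M[D]_(n, m)) (ceil_div (minn m n) u + 3).
Proof.
move=> u_ge2 /subnKC <- /subnKC <-.
rewrite -addn_minr ceil_div_addl ?(ltnW u_ge2) // -addn1 -addnA (addnC (ceil_div _ _)).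
exact: sumCC_covers_pid_block.
Qed.

Theorem theorem2p8 (D : unitRingType) (m n r : nat) (P : 'M[D]_(n, m)) :
  is_division_ring D ->
  (2 <= m)%N -> (2 <= n)%N ->
  drank_is P r -> (2 <= r)%N ->
  (exists N, sumCC_covers P N) /\
  (forall N, sumCC_covers P N -> (ceil_div (minn m n) r <= N)%N) /\
  (exists N, (N <= ceil_div (minn m n) r + 3)%N /\ sumCC_covers P N).
Proof.
(* [2 <= m] and [2 <= n] follow from [2 <= r <= minn m n]. *)
move=> divD _ _ rankP r_ge2; have r_gt0 : (0 < r)%N by apply: leq_trans r_ge2.
have [u le_u_nm /[dup] equivP [X [Y [_ _ eP]]]] := mx_equiv_pid divD P.
have le_ru : (r <= u)%N.
  apply: (drank_le_inner_dim divD rankP (L := X *m pid_mx u) (S := pid_mx u *m Y)).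
  by rewrite eP mulmxA -(mulmxA X (pid_mx u : 'M_(n, u))) mul_pid_mx !minnn.
have coverP : sumCC_covers P (ceil_div (minn m n) r + 3).
  apply: sumCC_covers_equiv equivP _.
  move: le_u_nm; rewrite leq_min => /andP[le_un le_um].
  apply: sumCC_covers_widen (sumCC_covers_pid (leq_trans r_ge2 le_ru) le_um le_un) _.
  by rewrite leq_add2r leq_ceil_div2l.
split; first by exists (ceil_div (minn m n) r + 3).
split; first by move=> N; apply: sumCC_covers_lower_bound.
by exists (ceil_div (minn m n) r + 3).
Qed.
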